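(* Let $n,m\ge1$. For each $i\in[n]$ let $d_i$ be a positive integer and $p_{i0}<p_{i1}<\cdots<p_{id_i}$ reals, and let $\mathcal{X}=\prod_{i\in[n]}\{p_{i0},\dots,p_{id_i}\}$. Let $P=\{\boldsymbol{x}\in\mathbb{R}^n: A\boldsymbol{x}\ge \boldsymbol{h}\}$ be a polytope. For each $t\in[m]$ and $i\in[n]$ let $f^t_i:\{p_{i0},\dots,p_{id_i}\}\to[L^t_i,U^t_i]$ and let $\phi^t:\prod_{i\in[n]}[L^t_i,U^t_i]\to\mathbb{R}$ be arbitrary. Define the lifted affine functions $\ell^t_i(\boldsymbol{z}_i)=f^t_i(p_{i0})+\sum_{j\in[d_i]}(f^t_i(p_{ij})-f^t_i(p_{i,j-1}))z_{ij}$ and the finite set $$G=\bigl\{(\boldsymbol{z},\boldsymbol{\mu})\in\operatorname{vert}(\Delta)\times\mathbb{R}^m:\ \mu^t=\phi^t(\ell^t_1(\boldsymbol{z}_1),\dots,\ell^t_n(\boldsymbol{z}_n))\ \forall t\in[m]\bigr\}.$$ Let $E=\{(\boldsymbol{x},\boldsymbol{z},\boldsymbol{\mu}): (\boldsymbol{z},\boldsymbol{\mu})\in\operatorname{conv}(G),\ \boldsymbol{x}\in P,\ \boldsymbol{z}\in\{0,1\}^{\sum_i d_i},\ (x_i,\boldsymbol{z}_i)\in B_i\ \forall i\in[n]\}$. Then $E$ is an MIP formulation of the graph $\{(\boldsymbol{x},\boldsymbol{\mu}):\boldsymbol{x}\in P\cap\mathcal{X},\ \mu^t=\phi^t(f^t_1(x_1),\dots,f^t_n(x_n))\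 \forall t\in[m]\}$. Moreover, when the polyhedral constraint is absent (i.e. $P$ is replaced by $\mathbb{R}^n$), this formulation is ideal.
   Context: $[n]=\{1,\dots,n\}$. For a positive integer $d$, $\Delta^d=\{\boldsymbol{z}\in\mathbb{R}^d:1\ge z_1\ge z_2\ge\cdots\ge z_d\ge0\}$; $\Delta=\Delta^{d_1}\times\cdots\times\Delta^{d_n}$ with $\boldsymbol{z}=(\boldsymbol{z}_1,\dots,\boldsymbol{z}_n)$, $\boldsymbol{z}_i=(z_{i1},\dots,z_{id_i})$; its vertex set is $\operatorname{vert}(\Delta)=\Delta\cap\{0,1\}^{\sum_i d_i}$. The unary binarization polytope is $B_i=\{(x_i,\boldsymbol{z}_i): x_i=p_{i0}+\sum_{j\in[d_i]}(p_{ij}-p_{i,j-1})z_{ij},\ \boldsymbol{z}_i\in\Delta^{d_i}\}$. An MIP formulation of a set $S$ is a set $E=\{(\boldsymbol{x},\boldsymbol{y},\boldsymbol{z})\in Q:\boldsymbol{z}\text{ binary}\}$, $Q$ a polyhedron, whose projection onto the original variables equals $S$; it is ideal if every vertex of its LP relaxation $Q$ (obtained by dropping the binary requirement) has binary $\boldsymbol{z}$. *)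

From HB Require Import structures.
From mathcomp Require Import all_boot all_order all_algebra.
Set Implicit Arguments. Unset Strict Implicit. Unset Printing Implicit Defensive.
Import Order.TTheory GRing.Theory Num.Theory.
Local Open Scope ring_scope.

Section Geometry.
Variable R : realFieldType.

Definition in_conv (I : Type) (S : (I -> R) -> Prop) (y : I -> R) : Prop :=
  exists (k : nat) (lam : 'I_k -> R) (pt : 'I_k -> I -> R),
    [/\ forall j, 0 <= lam j, \sum_(j < k) lam j = 1, forall j, S (pt j) &
        forall c, y c = \sum_(j < k) lam j * pt j c].

Definition polyhedron (I : finType) (Q : (I -> R) -> Prop) : Prop :=
  exists (k : nat) (a : 'I_k -> I -> R) (b : 'I_k -> R),
    forall y, Q y <-> forall r, b r <= \sum_(c : I) a r c * y c.

Definition vertex (I : Type) (Q : (I -> R) -> Prop) (y : I -> R) : Prop :=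
  Q y /\ forall (y1 y2 : I -> R) (lam : R), Q y1 -> Q y2 -> 0 < lam < 1 ->
    (forall c, y c = lam * y1 c + (1 - lam) * y2 c) -> forall c, y1 c = y2 c.

Definition binary (I : Type) (z : I -> R) : Prop :=
  forall c, z c = 0 \/ z c = 1.

End Geometry.

(* z-coordinates: (i, j) with i : 'I_n and j : 'I_(d i); the Rocq index j
   stands for the paper's index j+1 in [d_i]. *)
Definition zidx (n : nat) (d : 'I_n -> nat) : finType := {i : 'I_n & 'I_(d i)}.
Definition zmidx (n m : nat) (d : 'I_n -> nat) : finType := (zidx d + 'I_m)%type.
Definition xzmidx (n m : nat) (d : 'I_n -> nat) : finType :=
  ('I_n + zmidx m d)%type.

Section Binarization.
Variables (R : realFieldType) (n m : nat) (d : 'I_n -> nat).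

Definition zc (i : 'I_n) (j : 'I_(d i)) : zidx d :=
  existT (fun i0 : 'I_n => 'I_(d i0)) i j.

Definition aff (i : 'I_n) (g : 'I_(d i).+1 -> R) (z : zidx d -> R) : R :=
  g ord0 + \sum_(j < d i) (g (lift ord0 j) - g (widen_ord (leqnSn _) j)) * z (zc j).

Definition in_Delta (i : 'I_n) (z : zidx d -> R) : Prop :=
  (forall j : 'I_(d i), 0 <= z (zc j) <= 1) /\
  (forall (j : 'I_(d i)) (hj : (j.+1 < d i)%N), z (zc (Ordinal hj)) <= z (zc j)).

Definition in_B (p : forall i : 'I_n, 'I_(d i).+1 -> R) (i : 'I_n) (xi : R)
  (z : zidx d -> R) : Prop :=
  xi = aff (p i) z /\ in_Delta i z.

Definition zpart (w : zmidx m d -> R) : zidx d -> R := fun c => w (inl c).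
Definition mupart (w : zmidx m d -> R) : 'I_m -> R := fun t => w (inr t).
Definition xpart (y : xzmidx m d -> R) : 'I_n -> R := fun i => y (inl i).
Definition zmpart (y : xzmidx m d -> R) : zmidx m d -> R := fun c => y (inr c).

Definition Gset (f : 'I_m -> forall i : 'I_n, 'I_(d i).+1 -> R)
  (phi : 'I_m -> ('I_n -> R) -> R) (w : zmidx m d -> R) : Prop :=
  [/\ forall i, in_Delta i (zpart w), binary (zpart w) &
      forall t, mupart w t = phi t (fun i => aff (f t i) (zpart w))].

(* LP relaxation Q of E (E = Q with z binary), for polyhedral constraint Pset *)
Definition relax (Pset : ('I_n -> R) -> Prop)
  (p : forall i : 'I_n, 'I_(d i).+1 -> R)
  (f : 'I_m -> forall i : 'I_n, 'I_(d i).+1 -> R)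
  (phi : 'I_m -> ('I_n -> R) -> R) (y : xzmidx m d -> R) : Prop :=
  [/\ in_conv (Gset f phi) (zmpart y), Pset (xpart y) &
      forall i, in_B p i (xpart y i) (zpart (zmpart y))].

(* the graph { (x, mu) : x in P cap X, mu^t = phi^t(f^t_1(x_1),...,f^t_n(x_n)) } ;
   f^t_i is given on the grid point index: f t i j = f^t_i(p_ij). *)
Definition graph (Pset : ('I_n -> R) -> Prop)
  (p : forall i : 'I_n, 'I_(d i).+1 -> R)
  (f : 'I_m -> forall i : 'I_n, 'I_(d i).+1 -> R)
  (phi : 'I_m -> ('I_n -> R) -> R) (x : 'I_n -> R) (mu : 'I_m -> R) : Prop :=
  Pset x /\
  exists jx : forall i : 'I_n, 'I_(d i).+1,
    (forall i, x i = p i (jx i)) /\ (forall t, mu t = phi t (fun i => f t i (jx i))).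

Definition mip_formulation (Q : (xzmidx m d -> R) -> Prop)
  (S : ('I_n -> R) -> ('I_m -> R) -> Prop) : Prop :=
  polyhedron Q /\
  forall x mu, S x mu <->
    exists y, [/\ Q y, binary (zpart (zmpart y)), xpart y = x & zmpart y \o inr = mu].

Definition ideal (Q : (xzmidx m d -> R) -> Prop) : Prop :=
  forall y, vertex Q y -> binary (zpart (zmpart y)).

End Binarization.

(* The 0/1 points of Delta^{d_i} are the staircases (1,...,1,0,...,0), one for each
   grid index, and on the staircase with K ones the lifted affine function
   telescopes to f(p_iK). Hence G consists of one point per grid point, and since a
   0/1 point of a convex hull of 0/1 points equals every point of positive weight,
   the binary points of the relaxation are exactly the graph. The relaxation is a
   polyhedron because conv G is the projection of the polyhedron of convex weights
   on G, and projections of polyhedra are polyhedra by Fourier-Motzkin elimination.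
   Without P, x is an affine function of z, so a vertex of the relaxation, written as
   a combination of a grid point of positive weight and another point of the
   relaxation, must be that grid point. *)

From HB Require Import structures.
From mathcomp Require Import all_boot all_order all_algebra.
From mathcomp Require Import ring lra.
From Stdlib Require Import FunctionalExtensionality.
Set Implicit Arguments. Unset Strict Implicit. Unset Printing Implicit Defensive.
Import Order.TTheory GRing.Theory Num.Theory.
Local Open Scope ring_scope.

Section Polyhedra.
Variables (R : realFieldType) (I : finType).
Implicit Types (F G : (I -> R) -> R) (Q : (I -> R) -> Prop).

Definition affine F : Prop :=
  exists (a : I -> R) (v : R), forall y, F y = \sum_c a c * y c + v.

Lemma affine_cst (v : R) : affine (fun _ => v).
Proof. by exists (fun _ => 0), v => y; rewrite big1 ?add0r // => c _; rewrite mul0r. Qed.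

Lemma affine_coord (c0 : I) : affine (fun y => y c0).
Proof.
exists (fun c => (c == c0)%:R), 0 => y.
rewrite addr0 (bigD1 c0) //= eqxx mul1r big1 ?addr0 // => c /negPf ->.
by rewrite mul0r.
Qed.

Lemma affineD F G : affine F -> affine G -> affine (fun y => F y + G y).
Proof.
move=> [a [u Ha]] [b [v Hb]]; exists (fun c => a c + b c), (u + v) => y.
rewrite Ha Hb addrACA -big_split /=; congr (_ + _).
by apply: eq_bigr => c _; rewrite mulrDl.
Qed.

Lemma affineZ (k : R) F : affine F -> affine (fun y => k * F y).
Proof.
move=> [a [u Ha]]; exists (fun c => k * a c), (k * u) => y.
by rewrite Ha mulrDr mulr_sumr; under eq_bigr do rewrite mulrA.
Qed.

Lemma affine_ext F G : (forall y, F y = G y) -> affine F -> affine G.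
Proof. by move=> E [a [v H]]; exists a, v => y; rewrite -E. Qed.

Lemma affineB F G : affine F -> affine G -> affine (fun y => F y - G y).
Proof.
move=> HF /(affineZ (-1)) HG.
by apply: affine_ext (affineD HF HG) => y; rewrite mulN1r.
Qed.

Lemma affine_sum (J : finType) (F : J -> (I -> R) -> R) :
  (forall j, affine (F j)) -> affine (fun y => \sum_j F j y).
Proof.
move=> HF; apply: (@affine_ext (fun y => \sum_(j <- enum J) F j y)).
  by move=> y; rewrite big_enum.
elim: (enum J) => [|j s IH].
  by apply: affine_ext (affine_cst 0) => y; rewrite big_nil.
by apply: affine_ext (affineD (HF j) IH) => y; rewrite big_cons.
Qed.

Lemma polyhedron_ext Q1 Q2 :
  (forall y, Q1 y <-> Q2 y) -> polyhedron Q1 -> polyhedron Q2.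
Proof. by move=> E [k [a [b H]]]; exists k, a, b => y; rewrite -E. Qed.

Lemma polyhedronT : polyhedron (fun _ : I -> R => True).
Proof. by exists 0%N, (fun _ _ => 0), (fun _ => 0) => y; split => // _ []. Qed.

Lemma polyhedronI Q1 Q2 :
  polyhedron Q1 -> polyhedron Q2 -> polyhedron (fun y => Q1 y /\ Q2 y).
Proof.
move=> [k1 [a1 [b1 H1]]] [k2 [a2 [b2 H2]]].
exists (k1 + k2)%N, (fun r => match split r with inl r1 => a1 r1 | inr r2 => a2 r2 end),
  (fun r => match split r with inl r1 => b1 r1 | inr r2 => b2 r2 end) => y.
rewrite H1 H2; split=> [[h1 h2] r|h]; first by case: (split r).
split=> r; [have := h (lshift k2 r) | have := h (rshift k1 r)];
  by rewrite /= ?(unsplitK (inl r)) ?(unsplitK (inr r)).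
Qed.

Lemma polyhedron_ge (b : R) F : affine F -> polyhedron (fun y => b <= F y).
Proof.
move=> [a [v Ha]]; exists 1%N, (fun _ => a), (fun _ => b - v) => y.
by rewrite Ha lerBlDr; split=> [h _|/(_ ord0)].
Qed.

Lemma polyhedron_le F G : affine F -> affine G -> polyhedron (fun y => F y <= G y).
Proof.
move=> HF HG; apply: polyhedron_ext (polyhedron_ge 0 (affineB HG HF)) => y.
by rewrite subr_ge0.
Qed.

Lemma polyhedron_eq F G : affine F -> affine G -> polyhedron (fun y => F y = G y).
Proof.
move=> HF HG.
apply: polyhedron_ext (polyhedronI (polyhedron_le HF HG) (polyhedron_le HG HF)) => y.
by split=> [[h1 h2]|-> //]; apply/eqP; rewrite eq_le h1 h2.
Qed.

Lemma polyhedron_all (J : finType) (Q : J -> (I -> R) -> Prop) :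
  (forall j, polyhedron (Q j)) -> polyhedron (fun y => forall j, Q j y).
Proof.
move=> HQ; apply: (@polyhedron_ext (fun y => forall j, j \in enum J -> Q j y)).
  by move=> y; split=> h j => [|_]; apply: h; rewrite ?mem_enum.
elim: (enum J) => [|j s IH].
  by apply: polyhedron_ext polyhedronT => y; split=> // _ j.
apply: polyhedron_ext (polyhedronI (HQ j) IH) => y; split=> [[hj hs] j'|h].
  by rewrite inE => /predU1P [->|/hs].
by split=> [|j' js]; apply: h; rewrite inE ?eqxx ?js ?orbT.
Qed.

End Polyhedra.

Lemma polyhedron_comp (R : realFieldType) (I J : finType) (Q : (J -> R) -> Prop)
    (Phi : (I -> R) -> J -> R) :
  polyhedron Q -> (forall c, affine (fun y => Phi y c)) ->
  polyhedron (fun y => Q (Phi y)).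
Proof.
move=> [k [a [b H]]] HPhi.
apply: polyhedron_ext (polyhedron_all (fun r => polyhedron_ge (b r)
  (affine_sum (fun c => affineZ (a r c) (HPhi c))))) => y.
by rewrite H.
Qed.

Section FourierMotzkin.
Variable R : realFieldType.

Lemma scalar_ineqs_solvable (J : finType) (a e : J -> R) :
  (forall r r', 0 < a r -> a r' < 0 -> a r * e r' <= a r' * e r) ->
  (forall r, a r = 0 -> e r <= 0) ->
  exists t, forall r, e r <= a r * t.
Proof.
move=> Hpn H0.
case: (pickP (fun r => 0 < a r)) => [r0 Hr0 | Hnp].
  have [rs Hrs Hmax] := @arg_maxP _ _ _ r0 (fun r => 0 < a r) (fun r => e r / a r) Hr0.
  exists (e rs / a rs) => r; have [Har|Har|Har] := ltgtP (a r) 0.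
  - have := Hpn rs r Hrs Har; rewrite mulrA ler_pdivlMr //; lra.
  - by rewrite -ler_pdivrMl // mulrC; apply: Hmax.
  - by rewrite Har mul0r; apply: H0.
case: (pickP (fun r => a r < 0)) => [r0 Hr0 | Hnn].
  have [rs Hrs Hmin] := @arg_minP _ _ _ r0 (fun r => a r < 0) (fun r => e r / a r) Hr0.
  exists (e rs / a rs) => r; have [Har|Har|Har] := ltgtP (a r) 0.
  - by move: (Hmin r Har); rewrite /= ler_ndivlMr // mulrC.
  - by have := Hnp r; rewrite Har.
  - by rewrite Har mul0r; apply: H0.
exists 0 => r; rewrite mulr0; apply: H0.
by have [Har|Har|//] := ltgtP (a r) 0; [have := Hnn r | have := Hnp r]; rewrite Har.
Qed.

Lemma polyhedron_implies (I : finType) (b : bool) (Q : (I -> R) -> Prop) :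
  polyhedron Q -> polyhedron (fun y => b -> Q y).
Proof.
case: b => HQ; first by apply: polyhedron_ext HQ => y; split=> // /(_ isT).
by apply: polyhedron_ext (polyhedronT R I) => y.
Qed.

Lemma polyhedron_exists1 (I : finType) (c0 : I) (Q : (I -> R) -> Prop) :
  polyhedron Q -> polyhedron (fun y => exists t, Q [eta y with c0 |-> t]).
Proof.
move=> [k [a [b H]]].
pose e r y := b r - \sum_(c | c != c0) a r c * y c.
have He r : affine (e r).
  apply: affineB; first exact: affine_cst.
  exists (fun c => (c != c0)%:R * a r c), 0 => y.
  by rewrite addr0 big_mkcond; apply: eq_bigr => c _; case: (c != c0); rewrite ?mul1r ?mul0r.
have Hsum y t r : \sum_c a r c * [eta y with c0 |-> t] c = b r - e r y + a r c0 * t.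
  rewrite (bigD1 c0) //= eqxx /e subKr addrC; congr (_ + _).
  by apply: eq_bigr => c /negPf /= ->.
(* [t] exists iff each lower bound on [t] (rows with a r c0 > 0) lies below each
   upper bound (rows with a r c0 < 0), and the rows free of [t] hold. *)
pose C (rr : 'I_k * 'I_k) y := (0 < a rr.1 c0) && (a rr.2 c0 < 0) ->
  a rr.1 c0 * e rr.2 y <= a rr.2 c0 * e rr.1 y.
have HC : polyhedron (fun y => (forall rr, C rr y) /\ forall r, a r c0 == 0 -> e r y <= 0).
  apply: polyhedronI; apply: polyhedron_all => x; apply: polyhedron_implies.
    by apply: polyhedron_le; apply: affineZ.
  by apply: polyhedron_le => //; apply: affine_cst.
apply: polyhedron_ext HC => y; split=> [[HCy H0y]|[t /H Ht]].
  have [t Ht] := @scalar_ineqs_solvable _ (a^~ c0) (e^~ y)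
    (fun r r' ar ar' => HCy (r, r') (introT andP (conj ar ar')))
    (fun r ar => H0y r (introT eqP ar)).
  by exists t; apply/H => r; rewrite Hsum; have := Ht r; lra.
have Hr r : e r y <= a r c0 * t by have := Ht r; rewrite Hsum; lra.
split=> [[r r'] /andP[/= ar ar']|r /eqP ar0]; last by have := Hr r; rewrite ar0 mul0r.
have := ler_wpM2l (ltW ar) (Hr r'); have := ler_wnM2l (ltW ar') (Hr r).
rewrite !mulrA [a r' c0 * _]mulrC; lra.
Qed.

Definition sum_fun (I J : Type) (y : I -> R) (l : J -> R) : I + J -> R :=
  fun o => match o with inl c => y c | inr j => l j end.

Lemma polyhedron_exists (I J : finType) (Q : (I + J -> R) -> Prop) :
  polyhedron Q -> polyhedron (fun y => exists l : J -> R, Q (sum_fun y l)).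
Proof.
move=> HQ.
have QE w1 w2 : (forall o, w1 o = w2 o) -> Q w1 -> Q w2.
  by move=> /functional_extensionality ->.
pose Qs (s : seq J) (w : I + J -> R) :=
  exists l : J -> R, Q (sum_fun (w \o inl) (fun j => if j \in s then l j else w (inr j))).
have HQs s : polyhedron (Qs s).
  elim: s => [|j s IH].
    apply: polyhedron_ext HQ => w; split=> [Qw|[l Ql]].
      by exists (fun _ => 0); apply: QE Qw => -[].
    by apply: QE Ql => -[].
  apply: polyhedron_ext (polyhedron_exists1 (inr j) IH) => w.
  split=> [[t [l Ql]]|[l Ql]].
    exists (fun j' => if j' \in s then l j' else t); apply: QE Ql => -[i|j'] //=.
    by rewrite in_cons (inj_eq inr_inj); case: (j' \in s); rewrite ?orbT ?orbF.
  exists (l j), l; apply: QE Ql => -[i|j'] //=.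
  rewrite in_cons (inj_eq inr_inj); case: (j' \in s); rewrite ?orbT //= orbF.
  by case: eqP => [->|].
have Haff o : affine (fun y : I -> R => sum_fun y (fun _ : J => 0) o).
  by case: o => [c|j]; [exact: affine_coord | exact: affine_cst].
apply: polyhedron_ext (polyhedron_comp (HQs (enum J)) Haff) => y.
by split=> -[l Ql]; exists l; apply: QE Ql => -[i|j] //=; rewrite mem_enum.
Qed.

End FourierMotzkin.

Section Convexity.
Variables (R : realFieldType) (J : finType).
Implicit Types (lam : J -> R).

Definition convex_weights lam : Prop := (forall j, 0 <= lam j) /\ \sum_j lam j = 1.

Lemma convex_weights_pos lam : convex_weights lam -> exists j, 0 < lam j <= 1.
Proof.
move=> [H0 H1]; case: (pickP (fun j => 0 < lam j)) => [j Hj|Hn].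
  by exists j; rewrite Hj -H1 (bigD1 j) //= lerDl sumr_ge0.
suff : \sum_j lam j = 0 by rewrite H1 => /eqP; rewrite oner_eq0.
by apply: big1 => j _; apply/eqP; rewrite eq_le H0 andbT leNgt Hn.
Qed.

Lemma convex_comb_binary lam (v : J -> R) j0 :
  convex_weights lam -> (forall j, 0 <= v j <= 1) ->
  \sum_j lam j * v j = 0 \/ \sum_j lam j * v j = 1 -> lam j0 != 0 ->
  v j0 = \sum_j lam j * v j.
Proof.
move=> [H0 H1] Hv Hs Hl.
have vanish (u : J -> R) : (forall j, 0 <= u j) -> \sum_j lam j * u j = 0 -> u j0 = 0.
  move=> Hu /psumr_eq0P Hz.
  have /eqP := Hz (fun j _ => mulr_ge0 (H0 j) (Hu j)) j0 isT.
  by rewrite mulf_eq0 (negPf Hl) => /eqP.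
case: Hs => Hs; rewrite Hs.
  by apply: (vanish v) => // j; case/andP: (Hv j).
suff : 1 - v j0 = 0 by move/eqP; rewrite subr_eq0 eq_sym => /eqP.
apply: (vanish (fun j => 1 - v j)) => [j|].
  by rewrite subr_ge0; case/andP: (Hv j).
by under eq_bigr do rewrite mulrBr mulr1; rewrite sumrB H1 Hs subrr.
Qed.

Lemma convex_comb_split (I : Type) lam (pt : J -> I -> R) j0 :
  convex_weights lam -> 0 < lam j0 ->
  exists2 lam', convex_weights lam' & forall c,
    \sum_j lam j * pt j c = lam j0 * pt j0 c + (1 - lam j0) * \sum_j lam' j * pt j c.
Proof.
move=> [H0 H1] Hpos.
have Hrest : \sum_(j | j != j0) lam j = 1 - lam j0.
  by rewrite -H1 [in RHS](bigD1 j0) //= addrC addrK.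
have split_j0 c : \sum_j lam j * pt j c = lam j0 * pt j0 c + \sum_(j | j != j0) lam j * pt j c.
  by rewrite (bigD1 j0).
have [Hone|Hlt] := eqVneq (lam j0) 1.
  exists lam => // c; rewrite split_j0 Hone subrr mul0r addr0 mul1r big1 ?addr0 //.
  move=> j Hj; have /psumr_eq0P Hz : \sum_(j | j != j0) lam j = 0 by rewrite Hrest Hone subrr.
  by rewrite Hz ?mul0r // => j' _; exact: H0.
have Hr : 0 < 1 - lam j0.
  by rewrite lt0r subr_eq0 eq_sym Hlt -Hrest; apply: sumr_ge0.
exists (fun j => if j == j0 then 0 else lam j / (1 - lam j0)).
  split=> [j|]; first by case: eqP => // _; apply: divr_ge0 => //; exact: ltW.
  rewrite (bigD1 j0) //= eqxx add0r (eq_bigr (fun j => lam j / (1 - lam j0))).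
    by rewrite -mulr_suml Hrest divff // lt0r_neq0.
  by move=> j /negPf ->.
move=> c; rewrite split_j0 [in RHS](bigD1 j0) //= eqxx mul0r add0r mulr_sumr.
congr (_ + _); apply: eq_bigr => j /negPf ->.
by rewrite mulrA mulrCA divff ?mulr1 // lt0r_neq0.
Qed.

End Convexity.

Lemma in_conv_point (R : realFieldType) (I : Type) (S : (I -> R) -> Prop) w :
  S w -> in_conv S w.
Proof.
move=> Sw; exists 1%N, (fun _ => 1), (fun _ => w).
by split=> [_|||c]; rewrite ?big_ord1 ?mul1r ?ler01.
Qed.

Lemma vertex_comb (R : realFieldType) (I : Type) (Q : (I -> R) -> Prop) y y1 y2 mu :
  vertex Q y -> Q y1 -> Q y2 -> 0 < mu <= 1 ->
  (forall c, y c = mu * y1 c + (1 - mu) * y2 c) -> forall c, y c = y1 c.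
Proof.
move=> [_ Hv] Q1 Q2 /andP[mu_gt0 mu_le1] Hy c.
have [mu1|mu_lt1] := eqVneq mu 1; first by rewrite Hy mu1 subrr mul0r addr0 mul1r.
have mu01 : 0 < mu < 1 by rewrite mu_gt0 lt_neqAle mu_lt1.
by rewrite Hy (Hv _ _ _ Q1 Q2 mu01 Hy) -mulrDl subrKC mul1r.
Qed.

Lemma binary_nonincr_prefix (R : realFieldType) (D : nat) (z : 'I_D -> R) :
  binary z -> (forall (j : 'I_D) (hj : (j.+1 < D)%N), z (Ordinal hj) <= z j) ->
  exists K : 'I_D.+1, forall j : 'I_D, z j = (j < K)%:R.
Proof.
move=> Hb Hm.
pose zn (j : nat) := if insub j is Some o then z o else 0.
have zn_ord (o : 'I_D) : zn o = z o by rewrite /zn valK.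
have zn_dec i j : (i <= j)%N -> (j < D)%N -> zn j <= zn i.
  move=> /subnK <-; elim: (j - i)%N => [//|k IH] hD.
  apply: le_trans (IH (ltnW hD)).
  rewrite addSn in hD *; have := Hm (Ordinal (ltnW hD)) hD.
  by rewrite -(zn_ord (Ordinal hD)) -(zn_ord (Ordinal (ltnW hD))).
pose P j := (D <= j)%N || (zn j == 0).
have PD : P D by rewrite /P leqnn.
have [K PK minK] := ex_minnP (ex_intro P D PD).
have KD : (K <= D)%N := minK D PD.
exists (Ordinal (KD : (K < D.+1)%N)) => j /=.
have [jK|Kj] := ltnP j K.
  have : ~~ P j by apply: contraTN jK => /minK; rewrite leqNgt.
  by rewrite /P negb_or -ltnNge ltn_ord zn_ord /= => /eqP; case: (Hb j).
have KltD : (K < D)%N := leq_ltn_trans Kj (ltn_ord j).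
have zK0 : zn K = 0 by move: PK; rewrite /P leqNgt KltD => /eqP.
have := zn_dec K j Kj (ltn_ord j); rewrite zK0 zn_ord.
by case: (Hb j) => ->; rewrite ?ler10.
Qed.

Section Binarization.
Variables (R : realFieldType) (n m : nat) (d : 'I_n -> nat).
Unset Implicit Arguments.
Variables (f : 'I_m -> forall i : 'I_n, 'I_(d i).+1 -> R)
  (phi : 'I_m -> ('I_n -> R) -> R).
Set Implicit Arguments.

Definition grid := {dffun forall i : 'I_n, 'I_(d i).+1}.

Definition stair (jx : forall i, 'I_(d i).+1) : zidx d -> R :=
  fun c => ((tagged c : nat) < jx (tag c))%:R.

Definition lifted_mu (z : zidx d -> R) (t : 'I_m) : R :=
  phi t (fun i => aff (f t i) z).

Definition grid_point (jx : forall i, 'I_(d i).+1) : zmidx m d -> R :=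
  sum_fun (stair jx) (lifted_mu (stair jx)).

Lemma aff_prefix i (g : 'I_(d i).+1 -> R) (K : 'I_(d i).+1) (z : zidx d -> R) :
  (forall j : 'I_(d i), z (zc j) = (j < K)%:R) -> aff g z = g K.
Proof.
move=> Hz; rewrite /aff.
pose gn (k : nat) := g (inord k).
have E (j : 'I_(d i)) : (g (lift ord0 j) - g (widen_ord (leqnSn _) j)) * z (zc j)
    = (gn j.+1 - gn j) * (j < K)%:R.
  rewrite Hz /gn; congr ((g _ - g _) * _); apply: val_inj; rewrite /= inordK // ltnS //.
  exact: ltnW.
rewrite (eq_bigr _ (fun j _ => E j)).
rewrite -(big_mkord xpredT (fun j => (gn j.+1 - gn j) * (j < K)%:R)).
rewrite (big_cat_nat (leq0n K) (leq_ord K)) /=.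
rewrite [X in _ + (_ + X)](eq_big_nat _ _ (F2 := fun _ => 0)) => [|j /andP[Kj _]].
  rewrite big1_eq addr0 (eq_big_nat _ _ (F2 := fun j => gn j.+1 - gn j)) => [|j /andP[_ ->]].
    rewrite telescope_sumr // /gn inord_val.
    have -> : (inord 0 : 'I_(d i).+1) = ord0 by apply: val_inj; rewrite /= inordK.
    by rewrite addrC subrK.
  by rewrite mulr1.
by rewrite ltnNge Kj mulr0.
Qed.

Lemma aff_stair (jx : forall i, 'I_(d i).+1) i (g : 'I_(d i).+1 -> R) :
  aff g (stair jx) = g (jx i).
Proof. exact: aff_prefix. Qed.

Lemma stair01 (jx : forall i, 'I_(d i).+1) c : 0 <= stair jx c <= 1.
Proof. by rewrite /stair; case: (_ < _)%N; rewrite ?ler01 ?lexx. Qed.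

Lemma stair_binary (jx : forall i, 'I_(d i).+1) : binary (stair jx).
Proof. by move=> c; rewrite /stair; case: (_ < _)%N; [right|left]. Qed.

Lemma stair_Delta (jx : forall i, 'I_(d i).+1) i : in_Delta i (stair jx).
Proof.
split=> [j|j hj]; first exact: stair01.
by rewrite /stair /=; case: ltnP => [/ltnW ->|]; rewrite ?lexx ?ler0n.
Qed.

Lemma grid_point_G (jx : forall i, 'I_(d i).+1) : Gset f phi (grid_point jx).
Proof. by split=> [i||t]; [exact: stair_Delta | exact: stair_binary |]. Qed.

Lemma Gset_grid_point w : Gset f phi w -> exists jx : grid, w = grid_point jx.
Proof.
move=> [HD Hb Hmu].
have HK i : exists K : 'I_(d i).+1, forall j : 'I_(d i), zpart w (zc j) = (j < K)%:R.
  by apply: binary_nonincr_prefix => [j|]; [exact: Hb | exact: (HD i).2].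
have [K HKf] := fin_all_exists HK.
have Ez : zpart w = stair (finfun K).
  by apply: functional_extensionality => -[i j]; rewrite /stair ffunE HKf.
exists (finfun K); apply: functional_extensionality => -[c|t]; rewrite /grid_point /= -Ez //.
exact: Hmu.
Qed.

Lemma in_conv_gridP W :
  in_conv (Gset f phi) W <->
  exists2 lam : grid -> R, convex_weights lam &
    forall c, W c = \sum_jx lam jx * grid_point jx c.
Proof.
split=> [[k [lam [pt [H0 H1 HG Hc]]]]|[lam [H0 H1] Hc]].
  have [jxs Hjxs] := fin_all_exists (fun j => Gset_grid_point (HG j)).
  pose lam' (jx : grid) := \sum_(j | jxs j == jx) lam j.
  have regroup (F : grid -> R) : \sum_j lam j * F (jxs j) = \sum_jx lam' jx * F jx.
    rewrite (partition_big jxs xpredT) //=; apply: eq_bigr => jx _.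
    by rewrite mulr_suml; apply: eq_bigr => j /eqP <-.
  exists lam'; last by move=> c; rewrite Hc -regroup; under eq_bigr do rewrite Hjxs.
  split=> [jx|]; first exact: sumr_ge0.
  have := regroup (fun _ => 1).
  by rewrite !(eq_bigr _ (fun _ _ => mulr1 _)) H1 => <-.
exists #|grid|, (fun j => lam (enum_val j)), (fun j => grid_point (enum_val j : grid)).
split=> [i||i|c] /=; [exact: H0 | by rewrite -H1 -big_enum_val | exact: grid_point_G |].
by rewrite Hc -(big_enum_val (fun jx : grid => lam jx * grid_point jx c)).
Qed.

Lemma conv_Delta W : in_conv (Gset f phi) W -> forall i, in_Delta i (zpart W).
Proof.
move=> /in_conv_gridP [lam [H0 H1] Hc] i; rewrite /zpart; split=> [j|j hj]; rewrite !Hc.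
  apply/andP; split.
    by apply: sumr_ge0 => jx _; rewrite mulr_ge0 ?(andP (stair01 _ _)).1.
  by rewrite -H1; apply: ler_sum => jx _; rewrite ler_piMr ?(andP (stair01 _ _)).2.
by apply: ler_sum => jx _; rewrite ler_wpM2l ?(stair_Delta jx i).2.
Qed.

Lemma aff_comb i (g : 'I_(d i).+1 -> R) (z z1 z2 : zidx d -> R) (a : R) :
  (forall c, z c = a * z1 c + (1 - a) * z2 c) ->
  aff g z = a * aff g z1 + (1 - a) * aff g z2.
Proof.
move=> E; rewrite /aff !mulrDr addrACA -mulrDl subrKC mul1r !mulr_sumr -big_split /=.
by congr (_ + _); apply: eq_bigr => j _; rewrite E; ring.
Qed.

Lemma Delta_polyhedron i : polyhedron (fun z : zidx d -> R => in_Delta i z).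
Proof.
pose Q (z : zidx d -> R) := (forall j : 'I_(d i), 0 <= z (zc j) /\ z (zc j) <= 1) /\
  forall j j' : 'I_(d i), (j' == j.+1 :> nat) -> z (zc j') <= z (zc j).
have HQ : polyhedron Q.
  apply: polyhedronI; apply: polyhedron_all => j.
    apply: polyhedronI; apply: polyhedron_le; solve [exact: affine_coord | exact: affine_cst].
  apply: polyhedron_all => j'; apply: polyhedron_implies.
  by apply: polyhedron_le; apply: affine_coord.
apply: polyhedron_ext HQ => z; split=> [[Hb Hm]|[Hb Hm]].
  split=> [j|j hj]; first by case: (Hb j) => -> ->.
  by apply: Hm; rewrite eqxx.
split=> [j|j j' /eqP E]; first by case/andP: (Hb j).
have hj : (j.+1 < d i)%N by rewrite -E.
by rewrite (_ : j' = Ordinal hj) //; apply: val_inj.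
Qed.

Lemma conv_G_polyhedron : polyhedron (fun W : zmidx m d -> R => in_conv (Gset f phi) W).
Proof.
pose Q (w : zmidx m d + grid -> R) := convex_weights (fun jx => w (inr jx)) /\
  forall c, w (inl c) = \sum_(jx : grid) grid_point jx c * w (inr jx).
have HQ : polyhedron Q.
  apply: polyhedronI; first apply: polyhedronI.
  - by apply: polyhedron_all => jx; apply: polyhedron_ge; apply: affine_coord.
  - apply: polyhedron_eq; last exact: affine_cst.
    by apply: affine_sum => jx; apply: affine_coord.
  - apply: polyhedron_all => c; apply: polyhedron_eq; first exact: affine_coord.
    by apply: affine_sum => jx; apply: affineZ; apply: affine_coord.
apply: polyhedron_ext (polyhedron_exists HQ) => W; rewrite in_conv_gridP.
split=> [[lam [Hw Hc]]|[lam Hw Hc]]; exists lam; [done | move=> c | split=> // c];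
  by rewrite [LHS]Hc; under eq_bigr do rewrite mulrC.
Qed.

Lemma relax_polyhedron (Pset : ('I_n -> R) -> Prop) (p : forall i, 'I_(d i).+1 -> R) :
  polyhedron Pset -> polyhedron (relax Pset p f phi).
Proof.
move=> HP.
have Hconv : polyhedron (fun y : xzmidx m d -> R => in_conv (Gset f phi) (zmpart y)).
  by apply: polyhedron_comp conv_G_polyhedron _ => c; apply: affine_coord.
have HPx : polyhedron (fun y : xzmidx m d -> R => Pset (xpart y)).
  by apply: polyhedron_comp HP _ => i; apply: affine_coord.
have HB : polyhedron (fun y : xzmidx m d -> R =>
    forall i, in_B p i (xpart y i) (zpart (zmpart y))).
  apply: polyhedron_all => i; apply: polyhedronI.
    apply: polyhedron_eq; first exact: affine_coord.
    apply: affineD; first exact: affine_cst.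
    by apply: affine_sum => j; apply: affineZ; apply: affine_coord.
  by apply: polyhedron_comp (Delta_polyhedron i) _ => c; apply: affine_coord.
by apply: polyhedron_ext (polyhedronI Hconv (polyhedronI HPx HB)) => y; split=> [[? []]|[]].
Qed.

Lemma lifted_mu_stair (jx : forall i, 'I_(d i).+1) t :
  lifted_mu (stair jx) t = phi t (fun i => f t i (jx i)).
Proof. by congr (phi t); apply: functional_extensionality => i; exact: aff_stair. Qed.

Lemma graph_relaxP (Pset : ('I_n -> R) -> Prop) (p : forall i, 'I_(d i).+1 -> R) x mu :
  graph Pset p f phi x mu <->
  exists y, [/\ relax Pset p f phi y, binary (zpart (zmpart y)), xpart y = x &
                zmpart y \o inr = mu].
Proof.
split=> [[HP [jx [Hx Hmu]]]|[y [[Hconv HP HB] Hbin Hx Hmu]]].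
  exists (sum_fun x (grid_point jx)); split=> //; first split=> // [|i].
  - exact/in_conv_point/grid_point_G.
  - by split; [rewrite [LHS]Hx; symmetry; apply: aff_stair | exact: stair_Delta].
  - exact: (stair_binary jx).
  - by apply: functional_extensionality => t; rewrite /= Hmu; apply: lifted_mu_stair.
set z := zpart (zmpart y).
have [lam Hw Hc] := (in_conv_gridP _).1 Hconv.
have Hstair jx : lam jx != 0 -> stair jx = z.
  move=> Hl; apply: functional_extensionality => c.
  have Ezc : z c = \sum_jx lam jx * stair jx c by exact: Hc (inl c).
  have := Hbin c; rewrite -/z Ezc => Hsum.
  exact: (convex_comb_binary Hw (fun jx' => stair01 jx' c) Hsum Hl).
have HG : Gset f phi (zmpart y).
  split=> // [i|t]; first exact: (HB i).2.
  rewrite /mupart Hc (eq_bigr (fun jx => lam jx * lifted_mu z t)) => [|jx _].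
    by rewrite -mulr_suml Hw.2 mul1r.
  by have [->|/Hstair /= ->] := eqVneq (lam jx) 0; rewrite ?mul0r.
have [jx Ejx] := Gset_grid_point HG.
split; first by rewrite -Hx.
exists jx; split=> [i|t]; first by rewrite -Hx (HB i).1 /z Ejx aff_stair.
by rewrite -Hmu /= Ejx /= lifted_mu_stair.
Qed.

Lemma relax_ideal (p : forall i, 'I_(d i).+1 -> R) : ideal (relax (fun _ => True) p f phi).
Proof.
move=> y Hv; have [[Hconv _ HB] _] := Hv.
have [lam Hw Hc] := (in_conv_gridP _).1 Hconv.
have [jx0 Hpos] := convex_weights_pos Hw.
have [lam' Hw' Hsplit] := convex_comb_split (fun jx : grid => grid_point jx) Hw (andP Hpos).1.
pose W c := \sum_jx lam' jx * grid_point jx c.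
have HW : in_conv (Gset f phi) W by apply/in_conv_gridP; exists lam'.
pose xlift (V : zmidx m d -> R) : xzmidx m d -> R := sum_fun (fun i => aff (p i) (zpart V)) V.
have Hxlift V : in_conv (Gset f phi) V -> relax (fun _ => True) p f phi (xlift V).
  by move=> HV; split=> // i; split=> //; exact: conv_Delta.
have Hzm c : zmpart y c = lam jx0 * grid_point jx0 c + (1 - lam jx0) * W c.
  by rewrite Hc Hsplit.
have Hy o : y o = lam jx0 * xlift (grid_point jx0) o + (1 - lam jx0) * xlift W o.
  case: o => [i|c]; last exact: Hzm.
  by rewrite [y _](HB i).1; apply: aff_comb => c; exact: Hzm (inl c).
have Ey := vertex_comb Hv (Hxlift _ (in_conv_point (grid_point_G jx0))) (Hxlift _ HW) Hpos Hy.
by move=> c; rewrite /zpart /zmpart Ey; exact: stair_binary.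
Qed.

End Binarization.

Theorem lemma1 (R : realFieldType) (n m : nat) (d : 'I_n -> nat)
  (p : forall i : 'I_n, 'I_(d i).+1 -> R)
  (k : nat) (A : 'I_k -> 'I_n -> R) (h : 'I_k -> R)
  (L U : 'I_m -> 'I_n -> R)
  (f : 'I_m -> forall i : 'I_n, 'I_(d i).+1 -> R)
  (phi : 'I_m -> ('I_n -> R) -> R) :
  (0 < n)%N -> (0 < m)%N ->
  (forall i, (0 < d i)%N) ->
  (forall i (j j' : 'I_(d i).+1), (j < j')%N -> p i j < p i j') ->
  (* P = { x : A x >= h } is a polytope (bounded) *)
  (exists M : R, forall x : 'I_n -> R,
      (forall r, h r <= \sum_(i < n) A r i * x i) -> forall i, `|x i| <= M) ->
  (forall t i j, L t i <= f t i j <= U t i) ->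
  let P := fun x : 'I_n -> R => forall r, h r <= \sum_(i < n) A r i * x i in
  mip_formulation (relax P p f phi) (graph P p f phi) /\
  mip_formulation (relax (fun _ => True) p f phi) (graph (fun _ => True) p f phi) /\
  ideal (relax (fun _ => True) p f phi).
Proof.
move=> _ _ _ _ _ _ P; split; [|split].
- split; last by move=> x mu; exact: graph_relaxP.
  by apply: relax_polyhedron; exists k, A, h.
- split; last by move=> x mu; exact: graph_relaxP.
  exact/relax_polyhedron/polyhedronT.
- exact: relax_ideal.
Qed.
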